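(* Let $\mathcal{C}$ be an $(n,k,d)$ linear MDS code over a finite field $\mathbb{F}_q$, and let $d^\perp = n-d+2$. Then $$\rho(\mathcal{C}) \le \frac{\max\{d^\perp, d-1\}}{n}\binom{n}{d-2}.$$
   Context: An $(n,k,d)$ linear MDS code is a linear code over $\mathbb{F}_q$ of length $n$, dimension $k$ and minimum Hamming distance $d = n-k+1$; its dual is MDS with minimum distance $d^\perp = k+1 = n-d+2$. A parity-check matrix for $\mathcal{C}$ is any matrix (possibly with linearly dependent rows) whose rows span $\mathcal{C}^\perp$. For a parity-check matrix $H$, the stopping distance $s(H)$ is the largest integer such that for every set of $s(H)-1$ or fewer columns of $H$, the projection of $H$ onto those columns contains at least one row with exactly one nonzero entry. The stopping redundancy $\rho(\mathcal{C})$ is the smallest number of rows of a parity-check matrix $H$ for $\mathcal{C}$ with $s(H) = d$. *)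

From HB Require Import structures.
From mathcomp Require Import all_boot all_order all_algebra.
Set Implicit Arguments. Unset Strict Implicit. Unset Printing Implicit Defensive.
Import GRing.Theory.
Local Open Scope ring_scope.

Section Codes.
Variables (F : finFieldType) (n : nat).

Definition wt (v : 'rV[F]_n) : nat := #|[set i : 'I_n | v 0 i != 0]|.

(* The linear code generated by (the rows of) C is { c | (c <= C)%MS }.
   d is its minimum Hamming distance (= minimum weight of a nonzero codeword). *)
Definition is_min_distance (m : nat) (C : 'M[F]_(m, n)) (d : nat) : Prop :=
  (exists c : 'rV[F]_n, [/\ (c <= C)%MS, c != 0 & wt c = d]) /\
  (forall c : 'rV[F]_n, (c <= C)%MS -> c != 0 -> (d <= wt c)%N).

Definition in_dual (m : nat) (C : 'M[F]_(m, n)) (v : 'rV[F]_n) : Prop :=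
  forall c : 'rV[F]_n, (c <= C)%MS -> c *m v^T = 0.

(* H is a parity-check matrix of C: its rows span C^perp (rows may be dependent) *)
Definition parity_check (m r : nat) (C : 'M[F]_(m, n)) (H : 'M[F]_(r, n)) : Prop :=
  forall v : 'rV[F]_n, (v <= H)%MS <-> in_dual C v.

Definition has_single_row (r : nat) (H : 'M[F]_(r, n)) (S : {set 'I_n}) : Prop :=
  exists j : 'I_r, #|[set i in S | H j i != 0]| = 1%N.

Definition stop_cond (r : nat) (H : 'M[F]_(r, n)) (s : nat) : Prop :=
  forall S : {set 'I_n}, S != set0 -> (#|S| < s)%N -> has_single_row H S.

(* s(H) = s : s is the largest integer satisfying stop_cond (stop_cond is
   antitone in s, so this says exactly that s is the largest such integer) *)
Definition stopping_distance_is (r : nat) (H : 'M[F]_(r, n)) (s : nat) : Prop :=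
  stop_cond H s /\ ~ stop_cond H s.+1.

End Codes.

From HB Require Import structures.
From mathcomp Require Import all_boot all_order all_algebra.
From mathcomp Require Import zify.
Set Implicit Arguments. Unset Strict Implicit. Unset Printing Implicit Defensive.
Import Order.TTheory GRing.Theory Num.Theory.
Local Open Scope ring_scope.

(* The dual of an MDS code of dimension k is again MDS: a nonzero dual codeword
   vanishes on at most n - k - 1 coordinates.  Hence for each set T of
   d - 2 = n - k - 1 coordinates there is a dual codeword whose zero set is
   exactly T.  Fix a coordinate o and take these codewords, for all T avoiding o,
   as the rows of H; there are 'C(n - 1, d - 2) = (n - d + 2) / n * 'C(n, d - 2)
   of them.  For a nonempty set S of at most d - 1 columns, pick i in S (i = o
   when o is in S) and enlarge S minus i to such a T avoiding i: the row of T
   meets S exactly in i.  The rows span the dual code, since subtracting suitable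
   multiples of the rows of Z minus l, for l in a (d - 1)-set Z avoiding o, turns
   a dual codeword into one vanishing on Z, which is zero.  Finally no parity-check
   matrix stops beyond d: on the support of a minimum weight codeword no row of H
   can have a single nonzero entry, as the row is orthogonal to the codeword. *)

Lemma subset_extend (T : finType) (A U : {set T}) j :
  A \subset U -> (#|A| <= j <= #|U|)%N ->
  exists B : {set T}, [/\ A \subset B, B \subset U & #|B| = j].
Proof.
move=> sAU /andP[leAj lejU].
have : (0 < #|[set D : {set T} | D \subset U :\: A & #|D| == (j - #|A|)%N]|)%N.
  by rewrite cards_draws bin_gt0 cardsDS //; lia.
case/card_gt0P => D; rewrite inE => /andP[sDUA /eqP cardD].
have disjAD : [disjoint A & D].
  by rewrite disjoint_sym disjoints_subset (subset_trans sDUA) // subDset setUCr subsetT.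
exists (A :|: D); split; first exact: subsetUl.
  by rewrite subUset sAU (subset_trans sDUA) ?subsetDl.
by rewrite cardsU (disjoint_setI0 disjAD) cards0 cardD; lia.
Qed.

Section LinearCodes.
Variables (F : finFieldType) (n m : nat) (C : 'M[F]_(m, n)).

Lemma wt_gt0 (v : 'rV[F]_n) : (0 < wt v)%N = (v != 0).
Proof.
apply/card_gt0P/idP => [[i]|]; first by rewrite inE; apply: contraNneq => ->; rewrite mxE.
by case/rV0Pn => i vi; exists i; rewrite inE.
Qed.

Lemma wt_le_card (v : 'rV[F]_n) (K : {set 'I_n}) :
  {in ~: K, forall i, v 0 i = 0} -> (wt v <= #|K|)%N.
Proof.
move=> vK; apply/subset_leq_card/subsetP => i; rewrite inE.
by apply: contraNT => iK; rewrite vK ?inE.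
Qed.

Lemma in_dualE (v : 'rV[F]_n) : in_dual C v <-> (v <= kermx C^T)%MS.
Proof.
have kerE : (v <= kermx C^T)%MS = (C *m v^T == 0).
  by rewrite -trmx_eq0 trmx_mul trmxK; apply/sub_kermxP/eqP.
rewrite kerE; split=> [dv | /eqP Cv c /submxP[x ->]]; last by rewrite -mulmxA Cv mulmx0.
by apply/eqP/row_matrixP => i; rewrite row_mul row0 dv ?row_sub.
Qed.

Lemma stop_cond_leq_wt r (H : 'M[F]_(r, n)) s (c : 'rV[F]_n) :
  (H <= kermx C^T)%MS -> stop_cond H s -> (c <= C)%MS -> c != 0 -> (s <= wt c)%N.
Proof.
move=> HD stopH cC c0; rewrite leqNgt; apply/negP => wt_lt.
set S := [set i | c 0 i != 0].
have [|j /eqP/cards1P[i Si]] := stopH S _ wt_lt; first by rewrite -card_gt0 wt_gt0.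
have /in_dualE/(_ c cC)/matrixP/(_ 0 0) := submx_trans (row_sub j H) HD.
have iS : i \in [set x in S | H j x != 0] by rewrite Si set11.
rewrite !mxE (bigD1 i) //= big1 => [|l li]; rewrite !mxE.
  rewrite addr0 => /eqP; rewrite mulf_eq0.
  by move: iS; rewrite !inE => /andP[/negbTE -> /negbTE ->].
have : l \notin [set x in S | H j x != 0] by rewrite Si inE.
by rewrite !inE negb_and !negbK -mulf_eq0 => /eqP.
Qed.

Lemma parity_check_full_rank : \rank C = n -> parity_check C (0 : 'M[F]_(0, n)).
Proof.
move=> rankC v; split=> [/submx0null -> | /in_dualE vD].
  by move=> c _; rewrite trmx0 mulmx0.
have kerC0 : kermx C^T = 0 by apply/eqP; rewrite -mxrank_eq0 mxrank_ker mxrank_tr rankC subnn.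
by move: vD; rewrite kerC0 => /submx0null ->; exact: sub0mx.
Qed.

Definition restrmx (K : {set 'I_n}) : 'M[F]_(n, #|K|) := colsub enum_val 1%:M.

Lemma restrmxE (K : {set 'I_n}) (c : 'rV[F]_n) j : (c *m restrmx K) 0 j = c 0 (enum_val j).
Proof. by rewrite mulmx_colsub mulmx1 mxE. Qed.

Lemma sub_kermx_restrmx (K : {set 'I_n}) (c : 'rV[F]_n) :
  (c <= kermx (restrmx K))%MS = [forall i in K, c 0 i == 0].
Proof.
apply/sub_kermxP/forall_inP => [cK i iK | cK].
  by rewrite -(enum_rankK_in iK iK) -restrmxE cK mxE.
by apply/rowP => j; rewrite restrmxE mxE; apply/eqP/cK/enum_valP.
Qed.

Definition vanishing_dual_word (T : {set 'I_n}) (v : 'rV[F]_n) : bool :=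
  [&& (v <= kermx C^T)%MS, v != 0 & [forall i in T, v 0 i == 0]].

Lemma vanishing_dual_word_exists (T : {set 'I_n}) :
  (#|T| < n - \rank C)%N -> exists v, vanishing_dual_word T v.
Proof.
move=> cardT; set D := kermx C^T; set P := kermx (restrmx T).
have rankD : \rank D = (n - \rank C)%N by rewrite mxrank_ker mxrank_tr.
have rankP : (n - #|T| <= \rank P)%N by rewrite mxrank_ker leq_sub2l ?rank_leq_col.
have /rowV0Pn[v] : (D :&: P)%MS != 0.
  by rewrite -mxrank_eq0; have := mxrank_sum_cap D P; have := rank_leq_col (D + P)%MS; lia.
rewrite sub_capmx => /andP[vD vP] v0.
by exists v; rewrite /vanishing_dual_word vD v0 -sub_kermx_restrmx.
Qed.

(* The junk value 0 is only taken when #|T| >= n - \rank C. *)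
Definition dual_word (T : {set 'I_n}) : 'rV[F]_n :=
  odflt 0 [pick v | vanishing_dual_word T v].

Lemma dual_word_sub (T : {set 'I_n}) : (dual_word T <= kermx C^T)%MS.
Proof. by rewrite /dual_word; case: pickP => [v /and3P[]|_] //=; rewrite sub0mx. Qed.

Section MDS.
Hypothesis C_mds : forall c : 'rV[F]_n, (c <= C)%MS -> c != 0 -> (n - \rank C < wt c)%N.

Lemma mds_information_set (K : {set 'I_n}) : #|K| = \rank C ->
  forall u : 'rV[F]_#|K|,
  exists2 c : 'rV[F]_n, (c <= C)%MS & forall j, c 0 (enum_val j) = u 0 j.
Proof.
move=> cardK u; set P := restrmx K.
have cardKc : #|~: K| = (n - \rank C)%N by have := cardsC K; rewrite card_ord cardK; lia.
have kerP0 : \rank (C :&: kermx P)%MS = 0%N.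
  apply/eqP; rewrite mxrank_eq0; apply/rowV0P => v.
  rewrite sub_capmx sub_kermx_restrmx => /andP[vC /forall_inP vK].
  apply/eqP/negPn/negP => /(C_mds vC); rewrite -cardKc ltnNge wt_le_card // => i.
  by rewrite setCK => /vK/eqP.
have /submxP[x ux] : (u <= C *m P)%MS.
  apply/submx_full; have := mxrank_mul_ker C P.
  by rewrite kerP0 addn0 /row_full => ->; rewrite cardK.
by exists (x *m C) => [|j]; rewrite ?submxMl // -restrmxE -mulmxA -ux.
Qed.

Lemma mds_dual_vanishing_eq0 (v : 'rV[F]_n) (K : {set 'I_n}) :
  (v <= kermx C^T)%MS -> (n - \rank C <= #|K|)%N -> {in K, forall i, v 0 i = 0} ->
  v = 0.
Proof.
move=> vD cardK vK; apply/eqP/negPn/negP => /rV0Pn[i vi].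
have iKc : i \in ~: K by rewrite inE; apply: contraNN vi => /vK ->.
have cardKc : (#|~: K| <= \rank C <= #|[set: 'I_n]|)%N.
  by rewrite cardsT card_ord rank_leq_col andbT; have := cardsC K; rewrite card_ord; lia.
have [L [sKcL _ cardL]] := subset_extend (subsetT (~: K)) cardKc.
have iL : i \in L by apply: (subsetP sKcL).
have [c cC cL] := mds_information_set cardL (\row_j (enum_val j == i)%:R).
have cLE : {in L, forall l, c 0 l = (l == i)%:R}.
  by move=> l lL; rewrite -(enum_rankK_in lL lL) cL mxE enum_rankK_in.
have cvE l : c 0 l * v 0 l = (l == i)%:R * v 0 l.
  case: (boolP (l \in L)) => lL; first by rewrite cLE.
  by rewrite vK ?mulr0 //; apply: contraR lL => lK; apply: (subsetP sKcL); rewrite inE.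
move/in_dualE/(_ c cC)/matrixP/(_ 0 0): vD; rewrite !mxE.
under eq_bigr => l _ do rewrite mxE cvE.
rewrite (bigD1 i) //= eqxx mul1r big1 => [|l /negbTE ->]; last by rewrite mul0r.
by rewrite addr0; apply/eqP.
Qed.

Lemma dual_word_eq0 (T : {set 'I_n}) i :
  #|T|.+1 = (n - \rank C)%N -> (dual_word T 0 i == 0) = (i \in T).
Proof.
move=> cardT; have : vanishing_dual_word T (dual_word T).
  rewrite /dual_word; case: pickP => //= none.
  by have [|v] := @vanishing_dual_word_exists T; rewrite ?none // -cardT.
case/and3P=> _ wT0 /forall_inP wT; apply/idP/idP => [wTi|]; last exact: wT.
apply: contraLR wT0; rewrite negbK => iT; apply/eqP.
apply: (mds_dual_vanishing_eq0 (K := i |: T)); first exact: dual_word_sub.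
  by rewrite cardsU1 iT -cardT.
by move=> j /setU1P[-> | /wT/eqP]; first exact/eqP.
Qed.

Section StoppingMatrix.
Variable o : 'I_n.
Hypothesis rank_gt0 : (0 < \rank C)%N.
Hypothesis rank_lt : (\rank C < n)%N.

Let s := (n - \rank C).-1.

Definition zero_sets := [set T : {set 'I_n} | T \subset [set~ o] & #|T| == s].

Definition stop_mx : 'M[F]_(#|zero_sets|, n) := \matrix_(j, x) dual_word (enum_val j) 0 x.

Lemma row_stop_mx j : row j stop_mx = dual_word (enum_val j).
Proof. by apply/rowP => x; rewrite !mxE. Qed.

Lemma card_zero_sets : #|zero_sets| = 'C(n.-1, s).
Proof. by rewrite cards_draws cardsC1 card_ord. Qed.

Lemma zero_sets_card T : T \in zero_sets -> #|T|.+1 = (n - \rank C)%N.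
Proof. by rewrite inE => /andP[_ /eqP->]; rewrite /s; lia. Qed.

Lemma dual_word_sub_stop_mx T : T \in zero_sets -> (dual_word T <= stop_mx)%MS.
Proof.
by move=> TZ; rewrite -(enum_rankK_in TZ TZ) -row_stop_mx row_sub.
Qed.

Lemma stop_mx_dual : (stop_mx <= kermx C^T)%MS.
Proof. by apply/row_subP => j; rewrite row_stop_mx dual_word_sub. Qed.

Lemma stop_mx_parity_check : parity_check C stop_mx.
Proof.
move=> v; split=> [vH | /in_dualE vD]; first exact/in_dualE/(submx_trans vH stop_mx_dual).
have [|Z [_ sZo cardZ]] := @subset_extend _ set0 [set~ o] s.+1 (sub0set _).
  by rewrite cards0 cardsC1 card_ord /s; lia.
have ZlE l : l \in Z -> Z :\ l \in zero_sets.
  move=> lZ; rewrite inE (subset_trans (subD1set _ _) sZo) /=.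
  by have := cardsD1 l Z; rewrite lZ cardZ add1n => -[->].
pose w := \sum_(l in Z) (v 0 l / dual_word (Z :\ l) 0 l) *: dual_word (Z :\ l).
have wH : (w <= stop_mx)%MS.
  by apply: summx_sub => l lZ; apply/scalemx_sub/dual_word_sub_stop_mx/ZlE.
suff -> : v = w by [].
apply/eqP; rewrite -subr_eq0; apply/eqP/(mds_dual_vanishing_eq0 (K := Z)).
- by rewrite addmx_sub ?eqmx_opp // (submx_trans wH stop_mx_dual).
- by rewrite cardZ /s; lia.
move=> i iZ; rewrite !mxE summxE (bigD1 i) //= big1 => [|l /andP[lZ li]].
  rewrite mxE divfK ?addr0 ?subrr //.
  by rewrite dual_word_eq0 ?zero_sets_card ?ZlE // setD11.
apply/eqP; rewrite mxE mulf_eq0 dual_word_eq0 ?zero_sets_card ?ZlE //.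
by rewrite !inE iZ andbT (eq_sym i) li orbT.
Qed.

Lemma stop_cond_stop_mx : stop_cond stop_mx s.+2.
Proof.
move=> S S0 cardS.
have [i iS io] : exists2 i, i \in S & o \in S -> i = o.
  have [oS | oNS] := boolP (o \in S); first by exists o.
  by have /set0Pn[i iS] := S0; exists i => // /(negP oNS).
have sSU : S :\ i \subset [set~ o] :\ i.
  apply/subsetP => x; rewrite !inE => /andP[xi xS]; rewrite xi.
  by apply: contra_neq xi => xo; rewrite io -xo.
have cardSU : (#|S :\ i| <= s <= #|[set~ o] :\ i|)%N.
  move: cardS; have := cardsD1 i [set~ o]; have := cardsD1 i S.
  rewrite cardsC1 card_ord iS !inE /s; case: (i =P o) => _ /=;
  (* lia only identifies the cardinals once they are generalized *)
  by move: #|S| #|S :\ i| #|[set~ o] :\ i|; lia.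
have [T [sST sTo cardT]] := subset_extend sSU cardSU.
have TZ : T \in zero_sets by rewrite inE cardT eqxx (subset_trans sTo (subD1set _ _)).
exists (enum_rank_in TZ T); apply/eqP/cards1P; exists i; apply/setP => x.
rewrite !inE mxE enum_rankK_in // dual_word_eq0 ?zero_sets_card //.
have [-> | xi] := eqVneq x i.
  by rewrite iS; apply/negP => /(subsetP sTo); rewrite !inE eqxx.
by case xS : (x \in S); rewrite //= (subsetP sST) // !inE xi xS.
Qed.

End StoppingMatrix.

End MDS.
End LinearCodes.

Lemma natr_bin_pred (R : numFieldType) (n j : nat) : (0 < n)%N ->
  'C(n.-1, j)%:R = (n - j)%:R / n%:R * 'C(n, j)%:R :> R.
Proof.
move=> n_gt0; rewrite mulrAC -natrM -mul_bin_down natrM mulrAC divff ?mul1r //.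
by rewrite pnatr_eq0 -lt0n.
Qed.

Theorem corollary20 (F : finFieldType) (n k d m : nat) (C : 'M[F]_(m, n)) :
  \rank C = k ->
  is_min_distance C d ->
  d = (n - k + 1)%N ->
  exists (r : nat) (H : 'M[F]_(r, n)),
    [/\ parity_check C H, stopping_distance_is H d &
        (r%:R <= (maxn (n - d + 2) (d - 1))%:R / n%:R
                 * (if (2 <= d)%N then 'C(n, d - 2) else 0%N)%:R :> rat)].
Proof.
move=> rankC [[c [cC c0 wtc]] dmin] ed.
have C_mds c' : (c' <= C)%MS -> c' != 0 -> (n - \rank C < wt c')%N.
  by move=> cC' c0'; rewrite rankC -addn1 -ed dmin.
have rank_gt0 : (0 < \rank C)%N.
  rewrite lt0n mxrank_eq0; apply: contraNneq _ c0 => C0.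
  by move: cC; rewrite C0 => /submx0null ->.
have not_stop_cond_dS r (H : 'M[F]_(r, n)) : (H <= kermx C^T)%MS -> ~ stop_cond H d.+1.
  by move=> HD /(stop_cond_leq_wt HD)/(_ cC c0); rewrite wtc ltnn.
have [rank_lt | rank_ge] := ltnP (\rank C) n.
  have o : 'I_n := Ordinal (leq_ltn_trans (leq0n _) rank_lt).
  have d_eq : d = (n - \rank C).-1.+2 by lia.
  exists _, (stop_mx C o); split.
  - exact: stop_mx_parity_check.
  - split; last exact/not_stop_cond_dS/stop_mx_dual.
    by rewrite d_eq; exact: stop_cond_stop_mx.
  have -> : (2 <= d)%N by lia.
  have -> : (d - 2)%N = (n - \rank C).-1 by lia.
  rewrite card_zero_sets natr_bin_pred ?(leq_ltn_trans _ rank_lt) //.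
  apply/ler_wpM2r/ler_wpM2r; rewrite ?invr_ge0 ?ler0n // ler_nat; lia.
exists 0%N, 0; split.
- by apply: parity_check_full_rank; apply/eqP; rewrite eqn_leq rank_leq_col.
- by split; [move=> S; rewrite -card_gt0; lia | exact/not_stop_cond_dS/sub0mx].
have -> : (2 <= d)%N = false by lia.
by rewrite mulr0.
Qed.
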